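(* Let $(M,\circ,\mathrm{OR})$ be a free $\mathbb{D}$-module of rank 3 with scalar product and orientation, and let $z_1,z_2\in M\setminus\epsilon M$. Then $z_1$ and $z_2$ are proportional (i.e. $z_1=\lambda z_2$ for some $\lambda\in\mathbb{D}$) if and only if $z_1\times z_2=0$.
   Context: $\mathbb{D}=\{a+\epsilon b: a,b\in\mathbb{R}\}$, $\epsilon^2=0$. Scalar product: symmetric $\mathbb{D}$-bilinear $\circ:M\times M\to\mathbb{D}$ with $\mathfrak{Re}(x\circ x)\ge0$, equality iff $x\in\epsilon M$; orientation: one of the two classes of ordered bases under $\{b'_j=A_{jk}b_k\}\sim\{b_k\}$ iff $\det\mathfrak{Re}(A)>0$. Cross product: $x\times y=x^iy^j\epsilon_{ijk}m_k$ where $x=x^im_i$, $y=y^im_i$ in any positive orthonormal basis $\{m_i\}$ ($m_i\circ m_j=\delta_{ij}$). *)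

From HB Require Import structures.
From mathcomp Require Import all_boot all_order all_algebra.
From mathcomp Require Import reals.
From Stdlib Require Import ClassicalEpsilon.
From mathcomp Require Import ring.
Set Implicit Arguments. Unset Strict Implicit. Unset Printing Implicit Defensive.
Import Order.TTheory GRing.Theory Num.Theory.
Local Open Scope ring_scope.

(* ---- Dual numbers a + eps b, represented as pairs (a, b) ---- *)
Definition dual (R : realType) : Type := (R * R)%type.

Section Dual.
Variable R : realType.
HB.instance Definition _ := GRing.Zmodule.copy (dual R) (R * R)%type.

Definition dual_one : dual R := (1, 0).
Definition dual_mul (x y : dual R) : dual R :=
  (x.1 * y.1, x.1 * y.2 + x.2 * y.1).

Lemma dual_mulA : associative dual_mul.
Proof. move=> [a b] [c d] [e f]; rewrite /dual_mul /=; congr pair; simpl; ring. Qed.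
Lemma dual_mulC : commutative dual_mul.
Proof. by move=> [a b] [c d]; rewrite /dual_mul /=; congr pair; ring. Qed.
Lemma dual_mul1r : left_id dual_one dual_mul.
Proof. by move=> [a b]; rewrite /dual_mul /=; congr pair; ring. Qed.
Lemma dual_mulDl : left_distributive dual_mul +%R.
Proof. move=> [a b] [c d] [e f]; rewrite /dual_mul /=; congr pair; simpl; ring. Qed.
Lemma dual_oner_neq0 : dual_one != 0.
Proof. by rewrite /dual_one xpair_eqE oner_eq0. Qed.

HB.instance Definition _ := GRing.Zmodule_isComNzRing.Build (dual R)
  dual_mulA dual_mulC dual_mul1r dual_mulDl dual_oner_neq0.
End Dual.

Definition Re {R : realType} (x : dual R) : R := x.1.
Definition eps {R : realType} : dual R := (0, 1).

Section Module.
Variables (R : realType) (M : lmodType (dual R)).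

Definition in_epsM (x : M) : Prop := exists y : M, x = eps *: y.

Definition is_basis (m : 'I_3 -> M) : Prop :=
  forall x : M, exists! c : 'I_3 -> dual R, x = \sum_i c i *: m i.

Definition scalar_product (sp : M -> M -> dual R) : Prop :=
  [/\ (forall x y, sp x y = sp y x),
      (forall a x y z, sp (a *: x + y) z = a * sp x z + sp y z),
      (forall x, 0 <= Re (sp x x)) &
      (forall x, Re (sp x x) = 0 <-> in_epsM x)].

Definition same_orientation (b b' : 'I_3 -> M) : Prop :=
  forall A : 'M[dual R]_3,
    (forall j, b' j = \sum_k A j k *: b k) -> 0 < \det (map_mx Re A).

Definition orientation (OR : ('I_3 -> M) -> Prop) : Prop :=
  exists b0, is_basis b0 /\
    forall b, OR b <-> (is_basis b /\ same_orientation b0 b).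

Definition pos_orthonormal (sp : M -> M -> dual R) (OR : ('I_3 -> M) -> Prop)
  (m : 'I_3 -> M) : Prop :=
  OR m /\ forall i j, sp (m i) (m j) = (i == j)%:R.

(* coordinates of x in the basis m (the unique ones when m is a basis) *)
Definition coords (m : 'I_3 -> M) (x : M) : 'I_3 -> dual R :=
  epsilon (inhabits (fun _ => 0)) (fun c => x = \sum_i c i *: m i).

Definition levi (i j k : 'I_3) : int :=
  if [&& i != j, j != k & k != i] then
    (if (j : nat) == (i.+1 %% 3)%N then 1 else -1)
  else 0.

Definition cross (m : 'I_3 -> M) (x y : M) : M :=
  \sum_k (\sum_i \sum_j coords m x i * coords m y j * (levi i j k)%:~R) *: m k.
End Module.

From Pilot Require Import Defs.
From HB Require Import structures.
From mathcomp Require Import all_boot all_order all_algebra.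
From mathcomp Require Import reals.
From mathcomp Require Import ring.
From Stdlib Require Import ClassicalEpsilon.
Import Order.TTheory GRing.Theory Num.Theory.
Local Open Scope ring_scope.
Set Implicit Arguments. Unset Strict Implicit.

(* In the coordinates of the basis m, the components of z1 × z2 are the 2×2
   minors x_i y_j - x_j y_i of the coordinate vectors x and y of z1 and z2.
   As z2 is not in εM, some coordinate y_p has a nonzero real part, hence is
   invertible in D, and once all minors vanish x = (x_p / y_p) y. *)

Lemma proportional_iff_minors_eq0 (R : comPzRingType) (I : Type)
    (x y : I -> R) (p : I) (u : R) :
  u * y p = 1 ->
  (exists l, forall i, x i = l * y i) <-> (forall i j, x i * y j = x j * y i).
Proof.
move=> uyp; split=> [[l xE] i j | minors].
  by rewrite !xE -!mulrA (mulrC (y i)).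
exists (x p * u) => i.
by rewrite -[x i]mulr1 -uyp mulrCA minors mulrA (mulrC u).
Qed.

Local Notation i1 := (lift ord0 (ord0 : 'I_2) : 'I_3).
Local Notation i2 := (lift ord0 (lift ord0 (ord0 : 'I_1)) : 'I_3).

Lemma ord3_cases (k : 'I_3) : [\/ k = ord0, k = i1 | k = i2].
Proof.
by case: k => [[|[|[|//]]] lt_k3]; [constructor 1|constructor 2|constructor 3];
  apply: val_inj.
Qed.

Section LeviCivita.
Variables (R : comPzRingType) (x y : 'I_3 -> R).

Let levi_sum k := \sum_i \sum_j x i * y j * (levi i j k)%:~R.

Lemma levi_sumE :
  [/\ levi_sum ord0 = x i1 * y i2 - x i2 * y i1,
      levi_sum i1 = x i2 * y ord0 - x ord0 * y i2 &
      levi_sum i2 = x ord0 * y i1 - x i1 * y ord0].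
Proof.
rewrite /levi_sum !big_ord_recl !big_ord0 /levi /=.
by split; rewrite !(mulr0, mulr1, mulrN1, add0r, addr0) addrC.
Qed.

Lemma levi_sum_eq0 :
  (forall k, levi_sum k = 0) <-> (forall i j, x i * y j = x j * y i).
Proof.
have [E0 E1 E2] := levi_sumE.
split=> [vanish | minors k].
  have := vanish ord0; rewrite E0 => /subr0_eq e0.
  have := vanish i1; rewrite E1 => /subr0_eq e1.
  have := vanish i2; rewrite E2 => /subr0_eq e2.
  move=> i j; case: (ord3_cases i) => ->; case: (ord3_cases j) => ->;
    first [done | exact: e0 | exact: esym e0 | exact: e1 | exact: esym e1
          | exact: e2 | exact: esym e2].
by case: (ord3_cases k) => ->; rewrite ?E0 ?E1 ?E2 minors subrr.
Qed.

End LeviCivita.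

Section DualNumbers.
Variable R : realType.

Lemma dual_mulE (a b c d : R) :
  ((a, b) : dual R) * (c, d) = (a * c, a * d + b * c).
Proof. by []. Qed.

Lemma dual_Re0_eps (x : dual R) : Defs.Re x = 0 -> x = eps * (x.2, 0).
Proof.
by case: x => a b /= ->; rewrite /eps dual_mulE mul0r mulr0 mul1r add0r.
Qed.

Lemma dual_Re_unit (y : dual R) : Defs.Re y != 0 -> exists u, u * y = 1.
Proof.
case: y => a b /= a_neq0; exists (a^-1, - b / a ^+ 2).
by rewrite dual_mulE mulVf //; congr pair; field.
Qed.

End DualNumbers.

Lemma sum_Re0_in_epsM (R : realType) (M : lmodType (dual R)) (n : nat)
    (c : 'I_n -> dual R) (v : 'I_n -> M) :
  (forall i, Defs.Re (c i) = 0) -> in_epsM (\sum_i c i *: v i).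
Proof.
move=> Re_c0; exists (\sum_i (((c i).2, 0) : dual R) *: v i).
rewrite scaler_sumr; apply: eq_bigr => i _.
by rewrite scalerA -(dual_Re0_eps (Re_c0 i)).
Qed.

Lemma pos_orthonormal_basis (R : realType) (M : lmodType (dual R))
    (sp : M -> M -> dual R) (OR : ('I_3 -> M) -> Prop) (m : 'I_3 -> M) :
  orientation OR -> pos_orthonormal sp OR m -> is_basis m.
Proof. by move=> [b0 [_ ORP]] [/ORP []]. Qed.

Section Coordinates.
Variables (R : realType) (M : lmodType (dual R)) (m : 'I_3 -> M).
Hypothesis m_basis : is_basis m.

Lemma coordsP (x : M) : x = \sum_i coords m x i *: m i.
Proof.
have [c [xE _]] := m_basis x.
apply: (epsilon_spec (inhabits (fun _ => 0)) (fun c => x = \sum_i c i *: m i)).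
by exists c.
Qed.

Lemma coords_uniq (x : M) (c : 'I_3 -> dual R) :
  x = \sum_i c i *: m i -> coords m x = c.
Proof.
move=> xE; have [c0 [_ uniq_c]] := m_basis x.
by rewrite -(uniq_c _ (coordsP x)) (uniq_c _ xE).
Qed.

Lemma coordsZ (l : dual R) (x : M) :
  coords m (l *: x) = (fun i => l * coords m x i).
Proof.
apply: coords_uniq; rewrite {1}(coordsP x) scaler_sumr.
by apply: eq_bigr => i _; rewrite scalerA.
Qed.

Lemma scale_coordsP (z1 z2 : M) :
  (exists l, z1 = l *: z2) <->
  exists l, forall i, coords m z1 i = l * coords m z2 i.
Proof.
split=> [[l ->] | [l z1E]]; first by exists l => i; rewrite coordsZ.
exists l; rewrite (coordsP z1) (coordsP z2) scaler_sumr.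
by apply: eq_bigr => i _; rewrite z1E scalerA.
Qed.

Lemma cross_eq0 (x y : M) :
  cross m x y = 0 <->
  forall k, \sum_i \sum_j coords m x i * coords m y j * (levi i j k)%:~R = 0.
Proof.
split=> [cross0 k | vanish]; last by apply: big1 => k _; rewrite vanish scale0r.
have coords0 : coords m 0 = (fun _ => 0).
  by apply: coords_uniq; rewrite big1 // => i _; rewrite scale0r.
have /(congr1 (fun c => c k)) /= := coords_uniq (esym cross0).
by rewrite coords0 => <-.
Qed.

Lemma not_in_epsM_coord (z : M) :
  ~ in_epsM z -> exists p, Defs.Re (coords m z p) != 0.
Proof.
move=> z_notin.
case: (pickP (fun p => Defs.Re (coords m z p) != 0)) => [p | Re0]; first by exists p.
case: z_notin; rewrite (coordsP z); apply: sum_Re0_in_epsM => i.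
by apply/eqP/negbFE; rewrite Re0.
Qed.

End Coordinates.

Theorem proposition13 (R : realType) (M : lmodType (dual R))
  (sp : M -> M -> dual R) (OR : ('I_3 -> M) -> Prop)
  (Hfree : exists b : 'I_3 -> M, is_basis b)
  (Hsp : scalar_product sp) (HOR : orientation OR)
  (m : 'I_3 -> M) (Hm : pos_orthonormal sp OR m)
  (z1 z2 : M) (Hz1 : ~ in_epsM z1) (Hz2 : ~ in_epsM z2) :
  (exists lambda : dual R, z1 = lambda *: z2) <-> cross m z1 z2 = 0.
Proof.
have m_basis : is_basis m := pos_orthonormal_basis HOR Hm.
have [p Re_p] := not_in_epsM_coord m_basis Hz2.
have [u unit_p] := dual_Re_unit Re_p.
rewrite (scale_coordsP m_basis) (cross_eq0 m_basis) levi_sum_eq0.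
exact: proportional_iff_minors_eq0 unit_p.
Qed.
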